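(* Let $g$ be a positive integer, let $l\ge 1$, and let $(a,a+g)$ be a consecutive prospective prime pair with gap $g$ in $S_l$. Let $k>l$ and let $\mathring{n}_k^g$ denote the number of pairs in $S_k$ derived from $(a,a+g)$, i.e. the number of tuples $(m_{l+1},\dots,m_k)$ of integers with $0\le m_j\le P_j-1$ such that, with $M=\sum_{j=l+1}^{k}m_jP_{j-1}\#$, both $a+M$ and $a+g+M$ are coprime to $P_k\#$. Then \[\mathring{n}_k^g=\prod_{i=l+1}^{k}(P_i-2)\cdot\prod_{\substack{i=l+1\\ P_i\mid g}}^{k}\frac{P_i-1}{P_i-2}.\]
   Context: $P_k$ denotes the $k$-th prime ($P_1=2$) and $P_k\#=\prod_{i=1}^k P_i$. $S_k=\{N\in\mathbb{N}: 5\le N\le 4+P_k\#\}$. A prospective prime in $S_k$ is an $N\in S_k$ with $\gcd(N,P_k\#)=1$. Two prospective primes $a<b$ in $S_k$ are consecutive if no integer strictly between them is coprime to $P_k\#$; a consecutive prospective prime pair with gap $g$ in $S_k$ is a pair $(a,a+g)$ of consecutive prospective primes in $S_k$. *)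

From mathcomp Require Import all_boot all_order all_algebra.
Set Implicit Arguments. Unset Strict Implicit. Unset Printing Implicit Defensive.

Lemma ex_prime_gt (n : nat) : exists p, (n < p) && prime p.
Proof. by case: (prime_above n) => p H1 H2; exists p; rewrite H1 H2. Qed.

Definition next_prime (n : nat) : nat := ex_minn (ex_prime_gt n).

(* P k = k-th prime, with P 1 = 2 (P 0 = 1 is an auxiliary value). *)
Fixpoint P (k : nat) : nat :=
  if k is k'.+1 then next_prime (P k') else 1.

Definition primorial (k : nat) : nat := \prod_(1 <= i < k.+1) P i.

Definition in_S (k N : nat) : bool := (5 <= N) && (N <= 4 + primorial k).

Definition prospective (k N : nat) : bool := in_S k N && coprime N (primorial k).

Definition consecutive (k a b : nat) : bool :=
  [&& prospective k a, prospective k b, a < b &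
      [forall i : 'I_b, (a < i) ==> ~~ coprime i (primorial k)]].

Definition cpp_pair (k g a : nat) : bool := consecutive k a (a + g).

(* M = sum_{j=l+1}^k m_j P_{j-1}#, tuple indexed by i < k - l with j = l+1+i *)
Definition offset (l k : nat) (m : {dffun forall i : 'I_(k - l), 'I_(P (l.+1 + i))}) : nat :=
  \sum_(i < k - l) m i * primorial (l + i).

Definition n_derived (l k g a : nat) : nat :=
  #|[set m : {dffun forall i : 'I_(k - l), 'I_(P (l.+1 + i))} |
      coprime (a + offset m) (primorial k) && coprime (a + g + offset m) (primorial k)]|.

From mathcomp Require Import all_boot all_order all_algebra.
From mathcomp Require Import zify ring.
Import GRing.Theory Num.Theory.
Set Implicit Arguments. Unset Strict Implicit. Unset Printing Implicit Defensive.

(* Write Q = P_l# and N = P_(l+1) ... P_k. The offset of a tuple (m_j) is Q t,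
   where the m_j are the mixed-radix digits of t < N, so counting tuples is
   counting residues t mod N. By the Chinese remainder theorem the condition
   "a + Q t and a + g + Q t are both coprime to Q N" splits into independent
   conditions modulo each prime P_i, i > l. Modulo such a prime, t |-> a + Q t
   is a bijection (Q is invertible), and the excluded residues of a + Q t are
   0 and -g: two of them, or one when P_i divides g. *)

Lemma card_coprime_pair_mod p Q a g : prime p -> coprime Q p ->
  #|[set r : 'I_p | coprime (a + Q * r) p && coprime (a + g + Q * r) p]| =
  if p %| g then p - 1 else p - 2.
Proof.
case: p => [|[|p]] // p_pr coprime_Qp.
have dvdE x : (p.+2 %| x) = (x%:R == 0 :> 'Z_p.+2)%R.
  by rewrite /dvdn -val_eqE /= val_Zp_nat.
have coprimeE x : coprime x p.+2 = (x%:R != 0 :> 'Z_p.+2)%R.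
  by rewrite coprime_sym prime_coprime // dvdE.
pose f (r : 'Z_p.+2) := (a%:R + Q%:R * r)%R.
have f_inj : injective f.
  by move=> r s /addrI; apply: mulrI; rewrite unitZpE // coprime_sym.
have -> : [set r : 'I_p.+2 | coprime (a + Q * r) p.+2 && coprime (a + g + Q * r) p.+2] =
    f @^-1: ~: [set 0; - g%:R]%R.
  apply/setP => r; rewrite !inE !coprimeE !natrD !natrM natr_Zp /f.
  by rewrite negb_or -addrA (addrC g%:R%R) addrA [X in _ && ~~ X]addr_eq0.
rewrite (on_card_preimset (onW_bij _ (injF_bij f_inj))).
rewrite cardsCs setCK card_ord cards2 eq_sym oppr_eq0 dvdE.
by case: eqP.
Qed.

Lemma card_crt N p (F G : pred nat) : coprime N p -> 0 < N -> 0 < p ->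
  #|[set t : 'I_(N * p) | F (t %% N) && G (t %% p)]| =
  #|[set t : 'I_N | F t]| * #|[set r : 'I_p | G r]|.
Proof.
move=> coprime_Np N_gt0 p_gt0.
pose h (t : 'I_(N * p)) := (Ordinal (ltn_pmod t N_gt0), Ordinal (ltn_pmod t p_gt0)).
have h_bij : bijective h.
  apply: inj_card_bij; last by rewrite card_prod !card_ord.
  move=> t t' [/eqP eq_modN /eqP eq_modp]; apply/val_inj/eqP => /=.
  rewrite -(modn_small (ltn_ord t)) -[X in _ == X](modn_small (ltn_ord t')).
  by rewrite chinese_remainder // eq_modN eq_modp.
rewrite -cardsX -(on_card_preimset (onW_bij _ h_bij)).
by apply: eq_card => t; rewrite !inE.
Qed.

Lemma coprime_addM_modr x Q t N W : W %| Q * N ->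
  coprime (x + Q * (t %% N)) W = coprime (x + Q * t) W.
Proof.
move=> dvd_W; rewrite -coprime_modl -[RHS]coprime_modl; congr coprime.
have -> : x + Q * t = t %/ N * (Q * N) + (x + Q * (t %% N)).
  by rewrite {1}(divn_eq t N); ring.
by rewrite -[RHS](modn_dvdm _ dvd_W) modnMDl modn_dvdm.
Qed.

Section CoprimePairResidues.

Variables (p : nat -> nat) (Q a g : nat).
Hypothesis p_prime : forall i, prime (p i).
Hypothesis p_inj : injective p.
Hypothesis coprime_Q_p : forall i, coprime Q (p i).
Hypotheses (coprime_a_Q : coprime a Q) (coprime_ag_Q : coprime (a + g) Q).

Lemma coprime_prod_p n : coprime (\prod_(i < n) p i) (p n).
Proof.
apply: (big_ind (coprime^~ (p n))) => [|x y|i _]; first exact: coprime1n.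
  by rewrite coprimeMl => ->.
rewrite prime_coprime // dvdn_prime2 //; apply/eqP => /p_inj eq_in.
by move: (ltn_ord i); rewrite eq_in ltnn.
Qed.

Lemma card_coprime_pair_residues n :
  #|[set t : 'I_(\prod_(i < n) p i) |
      coprime (a + Q * t) (Q * \prod_(i < n) p i)
      && coprime (a + g + Q * t) (Q * \prod_(i < n) p i)]| =
  \prod_(i < n) (if p i %| g then p i - 1 else p i - 2).
Proof.
elim: n => [|n IHn].
  rewrite !big_ord0 muln1 -[RHS](card_ord 1) -cardsT; apply: eq_card => t.
  by rewrite !inE (ord1 t) muln0 !addn0 coprime_a_Q coprime_ag_Q.
set N := \prod_(i < n) p i.
have -> : \prod_(i < n.+1) p i = N * p n by rewrite big_ord_recr.
have N_gt0 : 0 < N by apply: prodn_gt0 => i; apply: prime_gt0.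
rewrite [RHS]big_ord_recr /= -IHn.
rewrite -(card_coprime_pair_mod a g (p_prime n) (coprime_Q_p n)).
rewrite -(card_crt
  (fun t => coprime (a + Q * t) (Q * N) && coprime (a + g + Q * t) (Q * N))
  (fun r => coprime (a + Q * r) (p n) && coprime (a + g + Q * r) (p n))
  (coprime_prod_p n) N_gt0 (prime_gt0 (p_prime n))).
apply: eq_card => t; rewrite !inE mulnA !(coprimeMr _ (Q * N) (p n)).
rewrite !(@coprime_addM_modr _ Q t N (Q * N)) //.
rewrite !(@coprime_addM_modr _ Q t (p n) (p n)) ?dvdn_mull //.
exact: andbACA.
Qed.

End CoprimePairResidues.

Section MixedRadix.

Variable b : nat -> nat.

Lemma radix_sum_lt n (c : nat -> nat) : (forall i, i < n -> c i < b i) ->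
  \sum_(i < n) c i * \prod_(j < i) b j < \prod_(j < n) b j.
Proof.
elim: n => [|n IHn] c_lt; first by rewrite big_ord0 big_ord0.
rewrite big_ord_recr [X in _ < X]big_ord_recr /=.
have := IHn (fun i lt_in => c_lt i (ltnW lt_in)); have := c_lt n (ltnSn n).
move: (\sum_(i < n) _) (\prod_(j < n) b j) => s w; nia.
Qed.

Lemma radix_sum_inj n (c c' : nat -> nat) :
  (forall i, i < n -> c i < b i) -> (forall i, i < n -> c' i < b i) ->
  \sum_(i < n) c i * \prod_(j < i) b j = \sum_(i < n) c' i * \prod_(j < i) b j ->
  forall i, i < n -> c i = c' i.
Proof.
elim: n => [|n IHn] c_lt c'_lt + i //; rewrite !big_ord_recr /=.
have c_lt' j : j < n -> c j < b j by move/ltnW/c_lt.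
have c'_lt' j : j < n -> c' j < b j by move/ltnW/c'_lt.
have w_gt0 : 0 < \prod_(j < n) b j.
  exact: leq_ltn_trans (leq0n _) (radix_sum_lt c_lt').
move=> eq_sum; have eq_top := congr1 (divn^~ (\prod_(j < n) b j)) eq_sum.
have eq_low := congr1 (modn^~ (\prod_(j < n) b j)) eq_sum.
rewrite /= !(addnC (\sum_(i < n) _)) !divnMDl // !divn_small ?radix_sum_lt // in eq_top.
rewrite /= !(addnC (\sum_(i < n) _)) !modnMDl !modn_small ?radix_sum_lt // in eq_low.
rewrite ltnS leq_eqVlt => /predU1P[-> | lt_in]; first by rewrite !addn0 in eq_top.
exact: IHn c_lt' c'_lt' eq_low i lt_in.
Qed.

Definition radix_value n (m : {dffun forall i : 'I_n, 'I_(b i)}) : nat :=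
  \sum_(i < n) m i * \prod_(j < i) b j.

Section Digits.

Variable n : nat.
Implicit Type m : {dffun forall i : 'I_n, 'I_(b i)}.

Let digit m j := if insub j is Some i then val (m i) else 0.

Let digit_lt m i : i < n -> digit m i < b i.
Proof.
by rewrite /digit; case: insubP => [i' _ <- _|/negP not_lt /not_lt //]; apply: ltn_ord.
Qed.

Let radix_valueE m : radix_value m = \sum_(i < n) digit m i * \prod_(j < i) b j.
Proof. by apply: eq_bigr => i _; rewrite /digit valK. Qed.

Lemma radix_value_lt m : radix_value m < \prod_(j < n) b j.
Proof. by rewrite radix_valueE radix_sum_lt // => i; apply: digit_lt. Qed.

Lemma radix_value_inj : injective (@radix_value n).
Proof.
move=> m m'; rewrite !radix_valueE.
move=> /(radix_sum_inj (digit_lt m) (digit_lt m')) eq_digit.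
by apply/ffunP => i; apply: val_inj; have := eq_digit i (ltn_ord i); rewrite /digit valK.
Qed.

Lemma card_radix_value_preim (F : pred nat) :
  #|[set m : {dffun forall i : 'I_n, 'I_(b i)} | F (radix_value m)]| =
  #|[set t : 'I_(\prod_(j < n) b j) | F t]|.
Proof.
pose h m : 'I_(\prod_(j < n) b j) := Ordinal (radix_value_lt m).
have h_bij : bijective h.
  apply: inj_card_bij; first by move=> m m' /(congr1 val)/radix_value_inj.
  rewrite card_ord card_dep_ffun foldrE big_map big_enum /=.
  by apply: eq_leq; apply: eq_bigr => i _; rewrite card_ord.
rewrite -(on_card_preimset (onW_bij _ h_bij)).
by apply: eq_card => m; rewrite !inE.
Qed.

End Digits.

End MixedRadix.

Lemma P_ltS_prime k : (P k < P k.+1) && prime (P k.+1).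
Proof. by rewrite /= /next_prime; case: ex_minnP. Qed.

Lemma P_prime i : 0 < i -> prime (P i).
Proof. by case: i => // i _; case/andP: (P_ltS_prime i). Qed.

Lemma ltn_P : {homo P : i j / i < j}.
Proof.
apply: homo_ltn => [j i k|i]; first exact: ltn_trans.
by case/andP: (P_ltS_prime i).
Qed.

Lemma P_inj : injective P.
Proof. exact/incn_inj/leq_mono/ltn_P. Qed.

Lemma P1 : P 1 = 2.
Proof.
rewrite /= /next_prime; case: ex_minnP => p /andP[p_gt1 _] p_min.
by apply/eqP; rewrite eqn_leq p_min.
Qed.

Lemma P_ge3 i : 1 < i -> 2 < P i.
Proof. by move=> lt_1i; rewrite -P1; apply: ltn_P. Qed.

Lemma primorialS m : primorial m.+1 = primorial m * P m.+1.
Proof. by rewrite /primorial big_nat_recr. Qed.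

Lemma primorialD l n : primorial (l + n) = primorial l * \prod_(i < n) P (l.+1 + i).
Proof.
elim: n => [|n IHn]; first by rewrite big_ord0 addn0 muln1.
by rewrite addnS primorialS IHn big_ord_recr mulnA.
Qed.

Lemma coprime_primorial_P m j : m < j -> coprime (primorial m) (P j).
Proof.
move=> lt_mj; rewrite /primorial big_nat_cond.
apply: (big_ind (coprime^~ (P j))) => [|x y|i /andP[/andP[i_gt0 le_im] _]].
- exact: coprime1n.
- by rewrite coprimeMl => ->.
rewrite prime_coprime ?P_prime // dvdn_prime2 ?P_prime //; last by case: j lt_mj.
by rewrite (inj_eq P_inj) neq_ltn (leq_ltn_trans _ lt_mj).
Qed.

Lemma n_derivedE l k g a :
  l < k -> coprime a (primorial l) -> coprime (a + g) (primorial l) ->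
  n_derived l k g a =
  \prod_(i < k - l) (if P (l.+1 + i) %| g then P (l.+1 + i) - 1 else P (l.+1 + i) - 2).
Proof.
move=> lt_lk coprime_a coprime_ag; pose b i := P (l.+1 + i).
have b_prime i : prime (b i) by apply: P_prime.
have b_inj : injective b by move=> i j /P_inj/addnI.
have coprime_b i : coprime (primorial l) (b i).
  by apply: coprime_primorial_P; rewrite ltnS leq_addr.
set Q := primorial l; set N := \prod_(i < k - l) b i.
have offsetE (m : {dffun forall i : 'I_(k - l), 'I_(b i)}) : offset m = Q * radix_value m.
  by rewrite /offset big_distrr; apply: eq_bigr => i _; rewrite primorialD mulnCA.
rewrite /n_derived (_ : primorial k = Q * N); last by rewrite -primorialD subnKC // ltnW.
rewrite -(card_coprime_pair_residues b_prime b_inj coprime_b coprime_a coprime_ag).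
rewrite -(@card_radix_value_preim b (k - l)
  (fun t => coprime (a + Q * t) (Q * N) && coprime (a + g + Q * t) (Q * N))).
by apply: eq_card => m; rewrite !inE offsetE.
Qed.

Local Open Scope ring_scope.

Lemma natr_prod_pair_counts (R : numFieldType) (q : nat -> nat) (d : pred nat) n :
  (forall i, i < n -> 2 < q i)%N ->
  (\prod_(i < n) (if d i then q i - 1 else q i - 2))%N%:R =
  \prod_(i < n) ((q i)%:R - 2)
  * \prod_(i < n | d i) (((q i)%:R - 1) / ((q i)%:R - 2)) :> R.
Proof.
move=> q_gt2; rewrite [X in _ = _ * X]big_mkcond -big_split natr_prod.
apply: eq_bigr => i _ /=.
have q_gt2i := q_gt2 i (ltn_ord i).
have q2_neq0 : (q i)%:R - 2 != 0 :> R.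
  by rewrite subr_eq0 eqr_nat neq_ltn q_gt2i orbT.
case: (d i); last by rewrite mulr1 natrB // ltnW.
by rewrite natrB ?(ltnW (ltnW q_gt2i)) // mulrC divfK.
Qed.

Theorem theorem1 (g l k a : nat) :
  (0 < g)%N -> (1 <= l)%N -> cpp_pair l g a -> (l < k)%N ->
  ((n_derived l k g a)%:R : rat) =
    (\prod_(l.+1 <= i < k.+1) ((P i)%:R - 2))
    * \prod_(l.+1 <= i < k.+1 | (P i %| g)%N) (((P i)%:R - 1) / ((P i)%:R - 2)).
Proof.
move=> _ l_gt0 pair_ag lt_lk.
have [coprime_a coprime_ag] : coprime a (primorial l) /\ coprime (a + g) (primorial l).
  by case/and4P: pair_ag => /andP[_ ->] /andP[_ ->].
have reindex (F : nat -> rat) (d : pred nat) :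
    \prod_(l.+1 <= i < k.+1 | d i) F i = \prod_(i < k - l | d (l.+1 + i)) F (l.+1 + i).
  by rewrite -{1}[l.+1]add0n big_addn big_mkord subSS; apply: eq_big => i; rewrite addnC.
rewrite n_derivedE // (@natr_prod_pair_counts _ (fun i => P (l.+1 + i))
  (fun i => P (l.+1 + i) %| g)%N); first by rewrite !reindex.
by move=> i _; apply: P_ge3; lia.
Qed.
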